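(* Let $A=(\Sigma,q,N,\delta)$ be a simple LQCA with $|N|=r\ge2$. Then every column $U_A(\cdot,c)$, $c\in\mathcal C_A$, has norm $1$ if and only if every $q$-cycle in the weighted de Bruijn graph $G_A$ has weight $1$.
   Context: A linear quantum cellular automaton (LQCA) is a tuple $A=(\Sigma,q,N,\delta)$ where $\Sigma$ is a finite nonempty set of states, $N=(a_1,\dots,a_r)$ is a strictly increasing sequence of integers, $\delta:\Sigma^r\to\mathbb C^\Sigma$ satisfies $\|\delta(w)\|>0$ for all $w$, and $q\in\Sigma$ satisfies $[\delta(q,\dots,q)](x)=1$ if $x=q$ and $0$ otherwise. It is simple if $a_r-a_1=r-1$. A configuration is a map $c:\mathbb Z\to\Sigma$ with $c_i\ne q$ for only finitely many $i$; $\mathcal C_A$ is the set of configurations. With $c_{i+N}=(c_{i+a_1},\dots,c_{i+a_r})$, $U_A(d,c)=\prod_{i\in\mathbb Z}[\delta(c_{i+N})](d_i)$, and $U_A(\cdot,c)$ is the column $d\mapsto U_A(d,c)$ with norm $\sqrt{\sum_d|U_A(d,c)|^2}$. The graph $G_A=(V,E,w)$ has vertex set $V=\Sigma^{r-1}$ (words of length $r-1$), edge set $E=\{(xz,zy):x,y\in\Sigma,z\in\Sigma^{r-2}\}$, and weight $w((xz,zy))=\|\delta(xzy)\|$. A path $(v_0,\dots,v_k)$ has weight $\prod_{i=0}^{k-1}w((v_i,v_{i+1}))$; it is a cycle if $k>0$ and $v_0=v_k$, and a $q$-cycle if moreover $v_0=q^{r-1}$. *)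

(* Complex amplitudes live in an arbitrary numeric closed
   field C (e.g. the complex numbers). *)
From Stdlib Require Import ClassicalEpsilon.
From Stdlib Require List.
From HB Require Import structures.
From mathcomp Require Import all_boot all_order all_algebra.
Set Implicit Arguments. Unset Strict Implicit. Unset Printing Implicit Defensive.
Import Order.TTheory GRing.Theory Num.Theory.
Local Open Scope ring_scope.

Section LQCA.
Variables (C : numClosedFieldType) (Sigma : finType).

Definition vnorm (v : Sigma -> C) : C := sqrtC (\sum_(x : Sigma) `|v x| ^+ 2).

(* A = (Sigma, q, N, delta) is an LQCA with r = size N; delta is applied to
   words of length r (represented as seq Sigma of size r). *)
Definition is_LQCA (q : Sigma) (N : seq int) (delta : seq Sigma -> Sigma -> C) : Prop :=
  [/\ (0 < size N)%N, sorted <%R N,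
      (forall w : seq Sigma, size w = size N -> 0 < vnorm (delta w)) &
      (forall x : Sigma, delta (nseq (size N) q) x = (x == q)%:R)].

Definition simple_nbhd (N : seq int) : Prop :=
  last 0 N - head 0 N = (size N)%:Z - 1.

Definition is_config (q : Sigma) (c : int -> Sigma) : Prop :=
  exists s : seq int, forall i : int, c i != q -> i \in s.

Definition window (N : seq int) (c : int -> Sigma) (i : int) : seq Sigma :=
  map (fun a => c (i + a)) N.

Definition iprod_is (f : int -> C) (v : C) : Prop :=
  exists s : seq int, [/\ uniq s, (forall i, i \notin s -> f i = 1) &
                          \prod_(i <- s) f i = v].
Definition iprod (f : int -> C) : C := epsilon (inhabits 0) (iprod_is f).

Definition U (N : seq int) (delta : seq Sigma -> Sigma -> C)
    (d c : int -> Sigma) : C :=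
  iprod (fun i => delta (window N c i) (d i)).

Definition csum_is (q : Sigma) (g : (int -> Sigma) -> C) (v : C) : Prop :=
  exists S : list (int -> Sigma),
    [/\ List.NoDup S, (forall d, List.In d S -> is_config q d),
        (forall d, is_config q d -> g d != 0 -> List.In d S) &
        \sum_(d <- S) g d = v].
Definition csum (q : Sigma) (g : (int -> Sigma) -> C) : C :=
  epsilon (inhabits 0) (csum_is q g).

Definition col_norm (q : Sigma) (N : seq int) (delta : seq Sigma -> Sigma -> C)
    (c : int -> Sigma) : C :=
  sqrtC (csum q (fun d => `|U N delta d c| ^+ 2)).

(* The weighted de Bruijn graph G_A: vertices are words of length r-1,
   edges (xz, zy) with weight ||delta(xzy)||. *)
Definition is_edge (r : nat) (u v : seq Sigma) : Prop :=
  [/\ size u = r.-1, size v = r.-1 &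
      exists (x y : Sigma) (z : seq Sigma), u = x :: z /\ v = rcons z y].

(* for an edge (xz, zy): xzy = x :: zy = head u :: v *)
Definition edge_weight (q : Sigma) (delta : seq Sigma -> Sigma -> C)
    (u v : seq Sigma) : C := vnorm (delta (head q u :: v)).

(* a path (v0, v1, ..., vk) is given by v0 and the list [v1; ...; vk] *)
Fixpoint is_path (r : nat) (v0 : seq Sigma) (vs : seq (seq Sigma)) : Prop :=
  match vs with
  | [::] => size v0 = r.-1
  | v :: vs' => is_edge r v0 v /\ is_path r v vs'
  end.

Fixpoint path_weight (q : Sigma) (delta : seq Sigma -> Sigma -> C)
    (v0 : seq Sigma) (vs : seq (seq Sigma)) : C :=
  match vs with
  | [::] => 1
  | v :: vs' => edge_weight q delta v0 v * path_weight q delta v vs'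
  end.

Definition is_qcycle (r : nat) (q : Sigma) (vs : seq (seq Sigma)) : Prop :=
  [/\ is_path r (nseq r.-1 q) vs, vs <> [::] & last (nseq r.-1 q) vs = nseq r.-1 q].

End LQCA.

(* For the simple neighbourhood N = (a, a+1, ..., a+r-1) the window c_{i+N} is the
   length-r subword of c starting at i+a.  If c is quiescent outside a finite
   interval, then U(d, c) vanishes unless d is too, and over the remaining finitely
   many d the column factorises: its squared norm is the product of the
   ||delta(c_{i+N})||^2 over the windows meeting the support (quiescent windows
   contribute 1).  The length-(r-1) subwords of c trace a q-cycle of G_A whose
   weight is exactly this product, and conversely every q-cycle is traced by the
   configuration spelled by the last letters of its vertices. *)

From Stdlib Require Import ClassicalEpsilon FunctionalExtensionality Classical.
From Stdlib Require List Permutation.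
From HB Require Import structures.
From mathcomp Require Import all_boot all_order all_algebra zify.
Set Implicit Arguments. Unset Strict Implicit. Unset Printing Implicit Defensive.
Import Order.TTheory GRing.Theory Num.Theory.
Local Open Scope ring_scope.

Lemma InP (T : eqType) (x : T) (s : seq T) : reflect (List.In x s) (x \in s).
Proof.
elim: s => [|y s IH] /=; first by constructor.
rewrite inE; apply: (iffP orP) => [[/eqP -> | /IH] | [-> | /IH]]; by [left | right].
Qed.

Lemma NoDup_map_inj (T : eqType) (U : Type) (f : T -> U) (s : seq T) :
  injective f -> uniq s -> List.NoDup (map f s).
Proof.
move=> inj_f; elim: s => [|x s IH] /=; first by constructor.
case/andP=> x_notin_s uniq_s; constructor; last exact: IH.
by case/List.in_map_iff=> y [/inj_f y_x /InP]; rewrite y_x (negbTE x_notin_s).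
Qed.

Lemma big_Permutation (R : Type) (idx : R) (op : Monoid.com_law idx)
    (T : Type) (F : T -> R) (s s' : list T) :
  Permutation.Permutation s s' -> \big[op/idx]_(x <- s) F x = \big[op/idx]_(x <- s') F x.
Proof.
elim=> [|x s1 s2 _ IH | x y s0 | s1 s2 s3 _ -> _ //] //.
- by rewrite !big_cons IH.
- by rewrite !big_cons Monoid.mulmCA.
Qed.

Lemma sum_filter_neq0 (V : nmodType) (T : Type) (F : T -> V) (s : list T) :
  \sum_(x <- s) F x = \sum_(x <- List.filter (fun x => F x != 0) s) F x.
Proof.
elim: s => [|x s IH] /=; first by rewrite !big_nil.
by rewrite big_cons; case: eqVneq => [->|_]; rewrite ?add0r ?big_cons IH.
Qed.

Section ChoiceValues.
Variable C : numClosedFieldType.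

Lemma csumE (Sigma : finType) (q : Sigma) (g : (int -> Sigma) -> C) (v : C) :
  csum_is q g v -> csum q g = v.
Proof.
move=> g_v; have [S [nodup_S cf_S supp_S <-]] : csum_is q g (csum q g).
  by apply: epsilon_spec; exists v.
case: g_v => S' [nodup_S' cf_S' supp_S' <-].
rewrite (sum_filter_neq0 g S) (sum_filter_neq0 g S'); apply: big_Permutation.
apply: Permutation.NoDup_Permutation; try exact: List.NoDup_filter.
move=> d; rewrite !List.filter_In; split=> -[d_in nz]; split=> //.
- by apply: supp_S' => //; apply: cf_S.
- by apply: supp_S => //; apply: cf_S'.
Qed.

Lemma iprodE (f : int -> C) (v : C) : iprod_is f v -> iprod f = v.
Proof.
move=> f_v; have [s [uniq_s one_s <-]] : iprod_is f (iprod f).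
  by apply: epsilon_spec; exists v.
case: f_v => s' [uniq_s' one_s' <-].
have prod_neq1 t : \prod_(i <- t) f i = \prod_(i <- [seq i <- t | f i != 1]) f i.
  by rewrite big_filter [RHS]big_mkcond; apply: eq_bigr => i _; case: eqVneq.
rewrite (prod_neq1 s) (prod_neq1 s'); apply/perm_big/uniq_perm; try exact: filter_uniq.
move=> i; rewrite !mem_filter; case: (eqVneq (f i) 1) => //= f_i.
have in_supp t : (forall j, j \notin t -> f j = 1) -> i \in t.
  by move=> one_t; apply: contraR f_i => /one_t ->; rewrite eqxx.
by rewrite !in_supp.
Qed.

End ChoiceValues.

Fixpoint iseg (a : int) (n : nat) : seq int :=
  if n is n'.+1 then a :: iseg (a + 1) n' else [::].

Lemma mem_iseg a n i : (i \in iseg a n) = (a <= i) && (i < a + n%:Z).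
Proof. by elim: n a => [|n IH] a /=; rewrite ?in_nil ?inE ?IH; lia. Qed.

Lemma iseg_uniq a n : uniq (iseg a n).
Proof. by elim: n a => //= n IH a; rewrite IH mem_iseg andbT; lia. Qed.

Lemma big_iseg (R : Type) (idx : R) (op : Monoid.law idx) (F : int -> R) a n :
  \big[op/idx]_(i <- iseg a n) F i = \big[op/idx]_(k < n) F (a + k%:Z).
Proof.
elim: n a => [|n IH] a; first by rewrite big_nil big_ord0.
rewrite big_cons IH big_ord_recl addr0; congr (op _ _).
by apply: eq_bigr => k _; congr F; rewrite /= /bump /=; lia.
Qed.

Lemma sorted_last_sub (x : int) (s : seq int) : sorted <%R (x :: s) ->
  (size s)%:Z <= last x s - x /\ (last x s - x = (size s)%:Z -> x :: s = iseg x (size s).+1).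
Proof.
elim: s x => [|y s IH] x /=; first by rewrite subrr.
case/andP=> x_lt_y sorted_ys; have [IH_le IH_eq] := IH y sorted_ys.
split=> [|E]; first lia.
rewrite IH_eq; last lia.
by have -> : y = x + 1 by lia.
Qed.

Lemma simple_nbhd_iseg (N : seq int) : sorted <%R N -> simple_nbhd N -> (0 < size N)%N ->
  N = iseg (head 0 N) (size N).
Proof.
case: N => [|x s] // sorted_N; rewrite /simple_nbhd /= => E _.
by apply: (sorted_last_sub sorted_N).2; lia.
Qed.

Lemma int_seq_bounded (s : seq int) : exists B : nat, forall i, i \in s -> - B%:Z < i < B%:Z.
Proof.
elim: s => [|x s [B IH]]; first by exists 0%N.
by exists (B + absz x).+1 => i; rewrite inE => /orP[/eqP->|/IH]; lia.
Qed.

Section Subwords.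
Variables (Sigma : finType) (q : Sigma).

Fixpoint subword (c : int -> Sigma) (j : int) (n : nat) : seq Sigma :=
  if n is n'.+1 then c j :: subword c (j + 1) n' else [::].

Lemma window_iseg a n c i : window (iseg a n) c i = subword c (i + a) n.
Proof. by elim: n a i => //= n IH a i; rewrite IH addrA. Qed.

Lemma size_subword c j n : size (subword c j n) = n.
Proof. by elim: n j => //= n IH j; rewrite IH. Qed.

Lemma subwordSr c j n : subword c j n.+1 = rcons (subword c j n) (c (j + n%:Z)).
Proof.
elim: n j => [|n IH] j; first by rewrite /= addr0.
have -> : subword c j n.+2 = c j :: subword c (j + 1) n.+1 by [].
by rewrite IH /=; do 3 f_equal; lia.
Qed.

Lemma nth_subword c j n k : (k < n)%N -> nth q (subword c j n) k = c (j + k%:Z).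
Proof.
elim: n j k => // n IH j [|k] /= lt_k_n; first by rewrite addr0.
by rewrite IH //; congr c; lia.
Qed.

Lemma subword_nseq c j n : (forall k, (k < n)%N -> c (j + k%:Z) = q) ->
  subword c j n = nseq n q.
Proof.
elim: n j => //= n IH j cq; rewrite -[j]addr0 cq // IH // => k lt_k_n.
by rewrite -(cq k.+1) //; congr c; lia.
Qed.

End Subwords.

Section ColumnNorm.
Variables (C : numClosedFieldType) (Sigma : finType) (q : Sigma)
  (delta : seq Sigma -> Sigma -> C) (a : int) (r : nat).
Hypothesis delta_quiescent : forall x, delta (nseq r q) x = (x == q)%:R.

Lemma vnorm_ge0 (v : Sigma -> C) : 0 <= vnorm v.
Proof. by rewrite sqrtC_ge0 sumr_ge0 // => x _; rewrite exprn_ge0. Qed.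

Definition extend (L : int) (m : nat) (t : {ffun 'I_m -> Sigma}) : int -> Sigma :=
  fun i => if L <= i then oapp t q (insub (absz (i - L))) else q.

Lemma extend_in L m t (k : 'I_m) : extend L t (L + k%:Z) = t k.
Proof.
rewrite /extend lerDl lez_nat /=.
have -> : L + k%:Z - L = k%:Z by rewrite addrC addKr.
by rewrite (valK k).
Qed.

Lemma extend_out L m (t : {ffun 'I_m -> Sigma}) i : i \notin iseg L m -> extend L t i = q.
Proof.
rewrite mem_iseg /extend; case: ifP => // L_le_i i_out.
by rewrite insubN //= -leqNgt; lia.
Qed.

Lemma extend_inj L m : injective (@extend L m).
Proof. by move=> t1 t2 E; apply/ffunP => k; rewrite -!(extend_in L) E. Qed.

Lemma extend_config L m (t : {ffun 'I_m -> Sigma}) : is_config q (extend L t).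
Proof. by exists (iseg L m) => i; apply: contraR => /(extend_out t) ->; rewrite eqxx. Qed.

Lemma extendE L m d : (forall i, i \notin iseg L m -> d i = q) ->
  d = extend L [ffun k : 'I_m => d (L + k%:Z)].
Proof.
move=> d_in; apply: functional_extensionality => i.
have [i_in | i_out] := boolP (i \in iseg L m); last by rewrite extend_out ?d_in.
have lt_im : (absz (i - L) < m)%N by move: i_in; rewrite mem_iseg; lia.
have -> : i = L + (Ordinal lt_im)%:Z by move: i_in; rewrite mem_iseg /=; lia.
by rewrite extend_in ffunE.
Qed.

Variables (c : int -> Sigma) (L : int) (m : nat).
Hypothesis c_quiescent : forall i, i \notin iseg L m -> subword c (i + a) r = nseq r q.

Lemma U_split d : is_config q d ->
  exists rest : seq int, [/\ forall i, i \in rest -> i \notin iseg L m,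
    forall i, i \notin iseg L m -> d i != q -> i \in rest &
    U (iseg a r) delta d c =
      (\prod_(k < m) delta (subword c (L + k%:Z + a) r) (d (L + k%:Z))) *
      \prod_(i <- rest) (d i == q)%:R].
Proof.
move=> [sd d_supp]; exists [seq i <- undup sd | i \notin iseg L m]; split.
- by move=> i; rewrite mem_filter => /andP[].
- by move=> i i_out d_i; rewrite mem_filter i_out mem_undup d_supp.
apply: iprodE; exists (iseg L m ++ [seq i <- undup sd | i \notin iseg L m]); split.
- rewrite cat_uniq iseg_uniq filter_uniq ?undup_uniq // andbT /=.
  by apply/hasPn => i; rewrite mem_filter => /andP[].
- move=> i; rewrite mem_cat negb_or mem_filter mem_undup => /andP[i_out].
  rewrite i_out /= window_iseg c_quiescent // delta_quiescent.
  by move=> /(contraNN (d_supp i)) /negPn /eqP ->; rewrite eqxx.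
rewrite big_cat big_iseg /=; congr (_ * _).
  by apply: eq_bigr => k _; rewrite window_iseg.
apply: eq_big_seq => i; rewrite mem_filter => /andP[i_out _].
by rewrite window_iseg c_quiescent // delta_quiescent.
Qed.

Lemma U_supported d : is_config q d -> (forall i, i \notin iseg L m -> d i = q) ->
  U (iseg a r) delta d c =
    \prod_(k < m) delta (subword c (L + k%:Z + a) r) (d (L + k%:Z)).
Proof.
move=> d_cf d_in; have [rest [rest_out _ ->]] := U_split d_cf.
by rewrite [X in _ * X]big1_seq ?mulr1 // => i /andP[_ /rest_out /d_in ->]; rewrite eqxx.
Qed.

Lemma U_eq0 d : is_config q d -> (exists2 i, i \notin iseg L m & d i != q) ->
  U (iseg a r) delta d c = 0.
Proof.
move=> d_cf [j j_out d_j]; have [rest [_ rest_in ->]] := U_split d_cf.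
apply/eqP; rewrite mulf_eq0; apply/orP; right; rewrite prodf_seq_eq0; apply/hasP.
by exists j; [exact: rest_in | rewrite (negbTE d_j) eqxx].
Qed.

Lemma csum_col :
  csum q (fun d => `|U (iseg a r) delta d c| ^+ 2) =
  \prod_(k < m) vnorm (delta (subword c (L + k%:Z + a) r)) ^+ 2.
Proof.
apply: csumE; exists (map (@extend L m) (enum {ffun 'I_m -> Sigma})); split.
- exact/NoDup_map_inj/enum_uniq/extend_inj.
- by move=> d /List.in_map_iff [t [<- _]]; apply: extend_config.
- move=> d d_cf; case: (classic (exists2 i, i \notin iseg L m & d i != q)) => [d_out | d_in].
    by rewrite U_eq0 // normr0 expr0n eqxx.
  have {}d_in i : i \notin iseg L m -> d i = q.
    by move=> i_out; apply/eqP/negPn/negP => d_i; apply: d_in; exists i.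
  move=> _; rewrite (extendE d_in); apply/List.in_map_iff; eexists; split=> //.
  by apply/InP; rewrite mem_enum.
rewrite big_map big_enum /=.
under [RHS]eq_bigr do rewrite sqrtCK.
rewrite bigA_distr_bigA /=; apply: eq_bigr => t _.
rewrite (U_supported (extend_config L t)) => [|i /extend_out //].
by rewrite normr_prod -prodrXl; apply: eq_bigr => k _; rewrite extend_in.
Qed.

Lemma col_normE :
  col_norm q (iseg a r) delta c = \prod_(k < m) vnorm (delta (subword c (L + k%:Z + a) r)).
Proof.
rewrite /col_norm csum_col prodrXl sqrCK //.
by apply: prodr_ge0 => k _; apply: vnorm_ge0.
Qed.

End ColumnNorm.

Section DeBruijnWalks.
Variables (C : numClosedFieldType) (Sigma : finType) (q : Sigma)
  (delta : seq Sigma -> Sigma -> C) (r : nat).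
Hypothesis r_ge2 : (2 <= r)%N.
Hypothesis delta_quiescent : forall x, delta (nseq r q) x = (x == q)%:R.

Let r_pred : r.-1 = r.-2.+1. Proof. lia. Qed.

Fixpoint walk (c : int -> Sigma) (k : int) (K : nat) : seq (seq Sigma) :=
  if K is K'.+1 then subword c (k + 1) r.-1 :: walk c (k + 1) K' else [::].

Lemma is_path_walk c k K : is_path r (subword c k r.-1) (walk c k K).
Proof.
elim: K k => [|K IH] k /=; first by rewrite size_subword.
split=> //; rewrite /is_edge !size_subword; split=> //.
exists (c k), (c (k + 1 + r.-2%:Z)), (subword c (k + 1) r.-2).
by rewrite r_pred; split=> //; apply: subwordSr.
Qed.

Lemma path_weight_walk c k K :
  path_weight q delta (subword c k r.-1) (walk c k K) =
  \prod_(t < K) vnorm (delta (subword c (k + t%:Z) r)).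
Proof.
elim: K k => [|K IH] k; first by rewrite big_ord0.
have head_edge : head q (subword c k r.-1) :: subword c (k + 1) r.-1 = subword c k r.
  by rewrite r_pred; have -> : r = r.-2.+2 by lia.
rewrite /= IH big_ord_recl addr0 /edge_weight head_edge; congr (_ * _).
by apply: eq_bigr => t _; congr (vnorm (delta (subword c _ r))); rewrite /= /bump /=; lia.
Qed.

Lemma last_walk c k K : last (subword c k r.-1) (walk c k K) = subword c (k + K%:Z) r.-1.
Proof.
elim: K k => [|K IH] k /=; first by rewrite addr0.
by rewrite IH; congr (subword c _ _); lia.
Qed.

Lemma path_walk c k vs : is_path r (subword c k r.-1) vs ->
  (forall j, (j < size vs)%N -> last q (nth [::] vs j) = c (k + j%:Z + r.-1%:Z)) ->
  vs = walk c k (size vs).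
Proof.
elim: vs k => [|v vs IH] k //= [[_ _ [x [y [z [u_eq v_eq]]]]] path_vs] last_vs.
have y_eq := last_vs 0%N erefl; rewrite /= v_eq last_rcons addr0 in y_eq.
rewrite r_pred /= in u_eq; case: u_eq => _ z_eq.
have v_sub : v = subword c (k + 1) r.-1.
  by rewrite v_eq r_pred subwordSr -z_eq y_eq; congr (rcons _ (c _)); lia.
rewrite v_sub; congr (_ :: _); apply: IH; first by rewrite -v_sub.
by move=> j lt_j; rewrite (last_vs j.+1) //; congr c; lia.
Qed.

(* The walk of length K from position k starts and ends at q^(r-1). *)
Definition quiescent_off (c : int -> Sigma) (k : int) (K : nat) : Prop :=
  forall t, (t < k + r.-1%:Z) || (k + K%:Z <= t) -> c t = q.

Lemma quiescent_off_config c k K : quiescent_off c k K -> is_config q c.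
Proof.
move=> c_q; exists (iseg (k + r.-1%:Z) K) => t; apply: contraR.
by rewrite mem_iseg => t_out; rewrite c_q ?eqxx //; lia.
Qed.

Lemma quiescent_start c k K : quiescent_off c k K -> subword c k r.-1 = nseq r.-1 q.
Proof. by move=> c_q; apply: subword_nseq => j lt_j; apply: c_q; lia. Qed.

Lemma qcycle_walk c k K : (0 < K)%N -> quiescent_off c k K -> is_qcycle r q (walk c k K).
Proof.
move=> K_gt0 c_q; rewrite /is_qcycle -(quiescent_start c_q); split.
- exact: is_path_walk.
- by case: K K_gt0 {c_q}.
rewrite last_walk (quiescent_start c_q); apply: subword_nseq => j lt_j.
by apply: c_q; lia.
Qed.

Lemma col_norm_walk a c k K : quiescent_off c k K ->
  col_norm q (iseg a r) delta c = path_weight q delta (subword c k r.-1) (walk c k K).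
Proof.
move=> c_q; rewrite path_weight_walk (col_normE delta_quiescent (L := k - a) (m := K)).
  by apply: eq_bigr => t _; congr (vnorm (delta (subword c _ r))); lia.
move=> i; rewrite mem_iseg => i_out; apply: subword_nseq => j lt_j; apply: c_q; lia.
Qed.

Definition spell (vs : seq (seq Sigma)) (t : int) : Sigma :=
  if t < r.-1%:Z then q else last q (nth [::] vs (absz t - r.-1)).

Lemma spell_start vs : subword (spell vs) 0 r.-1 = nseq r.-1 q.
Proof. by apply: subword_nseq => k lt_k; rewrite /spell ifT //; lia. Qed.

Lemma spell_walk vs : is_path r (nseq r.-1 q) vs -> vs = walk (spell vs) 0 (size vs).
Proof.
rewrite -(spell_start vs) => path_vs; apply: path_walk path_vs _ => j lt_j.
by rewrite /spell ifF; [congr (last q (nth _ _ _)) |]; lia.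
Qed.

Lemma spell_quiescent vs : is_qcycle r q vs -> quiescent_off (spell vs) 0 (size vs).
Proof.
case=> path_vs _ last_vs t t_out.
have [t_lt | t_ge] := boolP (t < r.-1%:Z); first by rewrite /spell ifT.
have [t_lt' | t_ge'] := boolP (t < (size vs)%:Z + r.-1%:Z); last first.
  by rewrite /spell ifF ?nth_default //; lia.
have last_q : subword (spell vs) (0 + (size vs)%:Z) r.-1 = nseq r.-1 q.
  by rewrite -last_walk -spell_walk // spell_start.
have lt_t : (absz (t - (size vs)%:Z) < r.-1)%N by lia.
have := nth_subword q (spell vs) (0 + (size vs)%:Z) lt_t.
by rewrite last_q nth_nseq lt_t => ->; congr spell; lia.
Qed.

Lemma qcycle_weight_of_col_norm a :
  (forall c, is_config q c -> col_norm q (iseg a r) delta c = 1) ->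
  forall vs, is_qcycle r q vs -> path_weight q delta (nseq r.-1 q) vs = 1.
Proof.
move=> col1 vs qcycle_vs; have spell_q := spell_quiescent qcycle_vs.
have [path_vs _ _] := qcycle_vs.
rewrite {1}(spell_walk path_vs) -(spell_start vs) -(col_norm_walk a spell_q).
exact/col1/quiescent_off_config/spell_q.
Qed.

Lemma col_norm_of_qcycle_weight a :
  (forall vs, is_qcycle r q vs -> path_weight q delta (nseq r.-1 q) vs = 1) ->
  forall c, is_config q c -> col_norm q (iseg a r) delta c = 1.
Proof.
move=> cycle1 c [s c_supp]; have [B s_bnd] := int_seq_bounded s.
have c_q : quiescent_off c (- B%:Z - r.-1%:Z) (2 * B + r.-1).
  by move=> t t_out; apply/eqP/negPn/negP => /c_supp /s_bnd; lia.
rewrite (col_norm_walk a c_q) (quiescent_start c_q); apply: cycle1.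
by apply: qcycle_walk c_q; lia.
Qed.

End DeBruijnWalks.

Unset Implicit Arguments.
Theorem lemma4 (C : numClosedFieldType) (Sigma : finType) (q : Sigma)
    (N : seq int) (delta : seq Sigma -> Sigma -> C) :
  is_LQCA q N delta -> simple_nbhd N -> (2 <= size N)%N ->
  ((forall c : int -> Sigma, is_config q c -> col_norm q N delta c = 1) <->
   (forall vs : seq (seq Sigma), is_qcycle (size N) q vs ->
      path_weight q delta (nseq (size N).-1 q) vs = 1)).
Proof.
case=> [N_gt0 N_sorted _ delta_q] N_simple.
have N_eq := simple_nbhd_iseg N_sorted N_simple N_gt0.
move: delta_q N_eq; set r := size N; set a := head 0 N; clearbody r a => delta_q -> r_ge2.
split; [exact: qcycle_weight_of_col_norm | exact: col_norm_of_qcycle_weight].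
Qed.
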